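(* Let $q\ge2$, let $\mathcal{D}$ be a $2k$-wise uniform distribution over $(\mathbb{Z}/q\mathbb{Z})^n$, and let $\eta\in[0,1]$. Then for every length-$n$ width-$w$ standard-order read-once branching program $f:(\mathbb{Z}/q\mathbb{Z})^n\to\{0,1\}$, $$\left|\mathbb{E}_{x\sim\mathcal{D}}(T_\eta f)(x)-\mathbb{E}_{x\gets(\mathbb{Z}/q\mathbb{Z})^n}f(x)\right|\le nw(1-\eta)^k,$$ where the second expectation is over uniform $x$. Equivalently, if $x\sim\mathcal{D}$ and $y\gets\mathrm{SC}_\eta(x)$, then $y$ is $nw(1-\eta)^k$-pseudorandom to every such $f$.
   Context: A distribution on $(\mathbb{Z}/q\mathbb{Z})^n$ is $t$-wise uniform if its marginal on any $t$ coordinates is uniform. $\mathrm{SC}_\eta(x)$ independently keeps each coordinate of $x$ with probability $1-\eta$ and replaces it with a uniform element of $\mathbb{Z}/q\mathbb{Z}$ with probability $\eta$; the noise operator is $(T_\eta f)(x)=\mathbb{E}[f(\mathrm{SC}_\eta(x))]$. A length-$n$ width-$w$ standard-order read-once branching program consists of layers $V_0,\dots,V_n$ each with at most $w$ vertices, a start vertex in $V_0$, a set of accepting vertices in $V_n$, and for each vertex of $V_{i-1}$ and each symbol $a\in\mathbb{Z}/q\mathbb{Z}$ an edge labeled $a$ to a vertex of $V_i$; on input $x$ one follows from the start the edges labeled $x_1,\dots,x_n$, and $f(x)=1$ iff the final vertex is accepting. *)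

From mathcomp Require Import all_boot all_order all_algebra.
Set Implicit Arguments. Unset Strict Implicit. Unset Printing Implicit Defensive.
Import Order.TTheory GRing.Theory Num.Theory.
Local Open Scope ring_scope.

(* Symbols of Z/qZ are represented by 'I_q = {0,...,q-1}; inputs are words
   x : 'I_n -> 'I_q. *)
Definition word (n q : nat) := {ffun 'I_n -> 'I_q}.

Definition is_distribution (R : numDomainType) (n q : nat) (D : word n q -> R) :=
  (forall x, 0 <= D x) /\ \sum_(x : word n q) D x = 1.

Definition twise_uniform (R : numFieldType) (n q t : nat) (D : word n q -> R) :=
  forall (S : {set 'I_n}) (a : word n q), (#|S| <= t)%N ->
    \sum_(x : word n q | [forall i in S, x i == a i]) D x = (q%:R ^+ #|S|)^-1.

Definition sc_prob (R : numFieldType) (n q : nat) (eta : R) (x y : word n q) : R :=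
  \prod_(i < n) ((1 - eta) * (y i == x i)%:R + eta / q%:R).

Definition noise_op (R : numFieldType) (n q : nat) (eta : R) (f : word n q -> R)
  (x : word n q) : R :=
  \sum_(y : word n q) sc_prob eta x y * f y.

(* Every layer V_0..V_n is (embedded into) 'I_w;
   trans i v a is the endpoint in V_(i+1) of the edge labelled a leaving
   vertex v of V_i. *)
Record ROBP (n w q : nat) := MkROBP {
  robp_start : 'I_w;
  robp_trans : 'I_n -> 'I_w -> 'I_q -> 'I_w;
  robp_accept : {set 'I_w} }.

Definition robp_final (n w q : nat) (B : ROBP n w q) (x : word n q) : 'I_w :=
  foldl (fun v i => robp_trans B i v (x i)) (robp_start B) (enum 'I_n).

Definition robp_fun (R : numDomainType) (n w q : nat) (B : ROBP n w q)
  (x : word n q) : R := (robp_final B x \in robp_accept B)%:R.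

(* Write the transition matrix of layer [i] on symbol [a] as [M_i(a) = Mbar_i + Delta_i(a)],
   where [Mbar_i] is the average of [M_i] over the symbol.  Noise turns the layer into
   [Mbar_i + (1 - eta) Delta_i(x_i)], so [T_eta f] is a product of these matrices.  Expanding it
   by the number [m] of [Delta] factors, the part with [m < k] factors is a function of degree
   [m], whose expectation under a [2k]-wise uniform [D] is its uniform expectation: [0] for
   [m > 0], and exactly [E_U f] for [m = 0].  The rest telescopes into [n] terms, one per layer
   at which the [k]-th [Delta] is taken; each is [(1 - eta)^k <Z, v>] with [Z] a row vector of
   degree [k] and [v] a vector with entries in [0, 1].  Since [|Z| <= (1 + Z^2)/2] and [Z^2] has
   degree [2k], it suffices that [E_U Z(u)^2 <= 1]: the parts of different degrees are
   orthogonal under the uniform distribution, and all of them together sum to an entry of a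
   difference of two stochastic matrices. *)

From mathcomp Require Import all_boot all_order all_algebra perm.
From mathcomp Require Import ring lra.
Import Order.TTheory GRing.Theory Num.Theory.
Local Open Scope ring_scope.
Set Implicit Arguments. Unset Strict Implicit. Unset Printing Implicit Defensive.

Lemma sum_indicatorM (R : pzRingType) (T : finType) (t : T) (F : T -> R) :
  \sum_u (t == u)%:R * F u = F t.
Proof.
rewrite (bigD1 t) //= eqxx mul1r big1 ?addr0 // => u.
by rewrite eq_sym => /negbTE ->; rewrite mul0r.
Qed.

Lemma sum_indicator (R : pzRingType) (T : finType) (t : T) :
  \sum_u (t == u)%:R = 1 :> R.
Proof.
by rewrite -[RHS](sum_indicatorM t (fun=> 1)); under [RHS]eq_bigr do rewrite mulr1.
Qed.

Lemma mulr_sum_powers (R : pzRingType) (r : R) (T : nat -> R) k :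
  r * \sum_(m < k.+1) r ^+ m * T m =
  \sum_(m < k.+1) r ^+ m * (if (m : nat) is m'.+1 then T m' else 0) + r ^+ k.+1 * T k.
Proof.
rewrite big_ord_recr big_ord_recl /= mulr0 add0r mulrDr mulr_sumr exprS -mulrA.
by congr (_ + _); apply: eq_bigr => m _; rewrite /bump add1n exprS mulrA.
Qed.

Lemma normr_le_halfD1sqr (R : realFieldType) (y : R) : `|y| <= (1 + y ^+ 2) / 2.
Proof.
have := sqr_ge0 (`|y| - 1); rewrite sqrrB1 real_normK ?num_real // mulr2n.
move: (y ^+ 2) (`|y|) => a b; lra.
Qed.

Lemma pnatr_neq0 (R : numDomainType) (q : nat) : (0 < q)%N -> q%:R != 0 :> R.
Proof. by rewrite pnatr_eq0 -lt0n. Qed.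

Section ProductExpectation.
Variables (R : numDomainType) (n q : nat).
Local Notation word := (word n q).
Implicit Types (c : 'I_n -> 'I_q -> R) (F G : word -> R).

Definition prod_mass c (y : word) := \prod_i c i (y i).
Definition expect c F := \sum_y prod_mass c y * F y.
Definition free_of (i : 'I_n) F :=
  forall y y' : word, (forall l, l != i -> y l = y' l) -> F y = F y'.

Lemma free_ofM i F G : free_of i F -> free_of i G -> free_of i (fun y => F y * G y).
Proof. by move=> hF hG y y' h; rewrite (hF y y' h) (hG y y' h). Qed.

Lemma sum_free_ofM (i : 'I_n) (b0 : 'I_q) F (K : 'I_q -> R) : free_of i F ->
  \sum_(y : word) F y * K (y i) = (\sum_(y : word | y i == b0) F y) * \sum_b K b.
Proof.
move=> hF; rewrite (partition_big (fun y : word => y i) predT) //= mulr_sumr.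
apply: eq_bigr => b _.
rewrite (eq_bigr (fun y : word => F y * K b)) => [|y /eqP <- //]; rewrite -mulr_suml.
congr (_ * _).
(* Swapping the symbols [b] and [b0] in coordinate [i] is a bijection preserving [F]. *)
pose s (y : word) : word := [ffun l => if l == i then tperm b b0 (y l) else y l].
have sK : involutive s.
  by move=> y; apply/ffunP => l; rewrite !ffunE; case: eqP => // _; rewrite tpermK.
rewrite (reindex_inj (inv_inj sK)) /=; apply: eq_big => [y|y _].
  by rewrite /s ffunE eqxx (canF_eq (tpermK b b0)) tpermL.
by apply: (hF (s y) y) => l hl; rewrite /s ffunE (negbTE hl).
Qed.

Lemma expect_free_ofM c (i : 'I_n) F (G : 'I_q -> R) :
  \sum_b c i b = 1 -> free_of i F ->
  expect c (fun y => F y * G (y i)) = expect c F * \sum_b c i b * G b.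
Proof.
move=> hc hF.
have [b0 _ | q0] := pickP (@predT 'I_q); last first.
  by move: hc; rewrite big_pred0 // => /esym/eqP; rewrite oner_eq0.
pose A (y : word) := (\prod_(l | l != i) c l (y l)) * F y.
have hA : free_of i A.
  move=> y y' h; rewrite /A (hF y y' h); congr (_ * _).
  by apply: eq_bigr => l hl; rewrite h.
have massE (y : word) : prod_mass c y = c i (y i) * \prod_(l | l != i) c l (y l).
  by rewrite /prod_mass (bigD1 i).
have -> : expect c F = \sum_y A y * c i (y i).
  by apply: eq_bigr => y _; rewrite massE /A; ring.
have -> : expect c (fun y => F y * G (y i)) = \sum_y A y * (c i (y i) * G (y i)).
  by apply: eq_bigr => y _; rewrite massE /A; ring.
by rewrite (sum_free_ofM b0 (fun b => c i b * G b) hA) (sum_free_ofM b0 (c i) hA) hc mulr1.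
Qed.

Lemma eq_expect c F G : F =1 G -> expect c F = expect c G.
Proof. by move=> e; apply: eq_bigr => y _; rewrite e. Qed.

Lemma expect_cst c (a : R) : (forall i, \sum_b c i b = 1) -> expect c (fun=> a) = a.
Proof.
move=> hc; rewrite /expect -mulr_suml /prod_mass -bigA_distr_bigA /=.
by rewrite big1 ?mul1r.
Qed.

Lemma expect0 c F : F =1 (fun=> 0) -> expect c F = 0.
Proof. by move=> e; rewrite /expect big1 // => y _; rewrite e mulr0. Qed.

Lemma expect_sum c (I : finType) (F : I -> word -> R) :
  expect c (fun y => \sum_j F j y) = \sum_j expect c (F j).
Proof. by rewrite /expect exchange_big; apply: eq_bigr => y _; rewrite mulr_sumr. Qed.

Lemma expectD c F G : expect c (fun y => F y + G y) = expect c F + expect c G.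
Proof. by rewrite /expect -big_split; apply: eq_bigr => y _; rewrite mulrDr. Qed.

Lemma ler_expect c F G : (forall i b, 0 <= c i b) -> (forall y, F y <= G y) ->
  expect c F <= expect c G.
Proof.
move=> hc hFG; apply: ler_sum => y _; apply: ler_wpM2l; last exact: hFG.
by apply: prodr_ge0 => i _; apply: hc.
Qed.

Lemma expect_free_of_sumM c (i : 'I_n) (I : finType) (F : I -> word -> R)
    (A : 'I_q -> I -> R) :
  \sum_b c i b = 1 -> (forall j, free_of i (F j)) ->
  expect c (fun y => \sum_j F j y * A (y i) j) =
  \sum_j expect c (F j) * \sum_b c i b * A b j.
Proof.
move=> c_sum F_free; rewrite expect_sum; apply: eq_bigr => j _.
exact: expect_free_ofM (fun b => A b j) c_sum (F_free j).
Qed.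

Lemma expect_free_of_sum2M c (i : 'I_n) (I J : finType) (F : I -> word -> R)
    (G : J -> word -> R) (A : 'I_q -> I -> R) (A' : 'I_q -> J -> R) :
  \sum_b c i b = 1 -> (forall j, free_of i (F j)) -> (forall k, free_of i (G k)) ->
  expect c (fun y => (\sum_j F j y * A (y i) j) * (\sum_k G k y * A' (y i) k)) =
  \sum_j \sum_k expect c (fun y => F j y * G k y) * \sum_b c i b * (A b j * A' b k).
Proof.
move=> c_sum F_free G_free.
transitivity (expect c (fun y =>
    \sum_j \sum_k (F j y * G k y) * (A (y i) j * A' (y i) k))).
  apply: eq_expect => y; rewrite mulr_suml; apply: eq_bigr => j _; rewrite mulr_sumr.
  by apply: eq_bigr => k _; rewrite mulrACA.
rewrite expect_sum; apply: eq_bigr => j _.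
rewrite expect_sum; apply: eq_bigr => k _.
exact: expect_free_ofM (fun b => A b j * A' b k) c_sum (free_ofM (F_free j) (G_free k)).
Qed.

End ProductExpectation.

Section LowDegree.
Variables (R : numFieldType) (n q : nat).
Local Notation word := (word n q).
Implicit Types (g h : word -> R) (S : {set 'I_n}).

Definition depends_on S g := forall x y : word, {in S, x =1 y} -> g x = g y.

(* Sums of juntas on at most [t] coordinates, i.e. functions of degree at most [t]. *)
Inductive low_degree (t : nat) : (word -> R) -> Prop :=
| low_degree_junta S g : (#|S| <= t)%N -> depends_on S g -> low_degree t g
| low_degreeD g h : low_degree t g -> low_degree t h -> low_degree t (fun x => g x + h x)
| eq_low_degree g h : low_degree t g -> g =1 h -> low_degree t h.

Lemma low_degreeW t t' g : (t <= t')%N -> low_degree t g -> low_degree t' g.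
Proof.
move=> le_tt'; elim=> {g} [S g hS hg | g h _ ? _ ? | g h _ ? e].
- exact: low_degree_junta (leq_trans hS le_tt') hg.
- exact: low_degreeD.
- exact: eq_low_degree e.
Qed.

Lemma low_degree_cst t (a : R) : low_degree t (fun=> a).
Proof. by apply: (@low_degree_junta _ set0); rewrite ?cards0. Qed.

Lemma low_degree_coord t (i : 'I_n) (G : 'I_q -> R) :
  (0 < t)%N -> low_degree t (fun x => G (x i)).
Proof.
move=> t_gt0; apply: (@low_degree_junta _ [set i]); first by rewrite cards1.
by move=> x y h; rewrite h ?set11.
Qed.

Lemma low_degreeM a b g h :
  low_degree a g -> low_degree b h -> low_degree (a + b) (fun x => g x * h x).
Proof.
move=> hg; elim: hg h => {g} [S g hS dg h | g1 g2 _ H1 _ H2 h hh | g1 g2 _ H e h hh].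
- elim=> {h} [S' h hS' dh | h1 h2 _ H1 _ H2 | h1 h2 _ H e].
  + apply: (@low_degree_junta _ (S :|: S')).
      by rewrite cardsU (leq_trans (leq_subr _ _)) ?leq_add.
    by move=> x y hxy; rewrite (dg x y) ?(dh x y) // => i hi; rewrite hxy // inE hi ?orbT.
  + by apply: eq_low_degree (low_degreeD H1 H2) _ => x; rewrite mulrDr.
  + by apply: eq_low_degree H _ => x; rewrite e.
- by apply: eq_low_degree (low_degreeD (H1 h hh) (H2 h hh)) _ => x; rewrite mulrDl.
- by apply: eq_low_degree (H h hh) _ => x; rewrite e.
Qed.

Lemma low_degree_sum t (I : Type) (r : seq I) (P : pred I) (F : I -> word -> R) :
  (forall i, low_degree t (F i)) -> low_degree t (fun x => \sum_(i <- r | P i) F i x).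
Proof.
move=> hF; elim: r => [|a r IH].
  by apply: eq_low_degree (low_degree_cst t 0) _ => x; rewrite big_nil.
case hP: (P a).
  by apply: eq_low_degree (low_degreeD (hF a) IH) _ => x; rewrite big_cons hP.
by apply: eq_low_degree IH _ => x; rewrite big_cons hP.
Qed.

Hypothesis q_gt0 : (0 < q)%N.

Lemma agree_indicatorE S (a x : word) :
  [forall i in S, a i == x i]%:R = \prod_i (if i \in S then (a i == x i)%:R else 1) :> R.
Proof.
case: (boolP [forall i in S, a i == x i]) => [/forall_inP agree | /forall_inPn [i iS /negbTE ne]].
  by rewrite big1 // => i _; case: ifP => // /agree ->.
by rewrite (bigD1 i) //= iS ne mul0r.
Qed.

Lemma card_agree S (x : word) :
  \sum_(a : word) [forall i in S, a i == x i]%:R = q%:R ^+ #|~: S| :> R.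
Proof.
under eq_bigr do rewrite agree_indicatorE.
rewrite -(bigA_distr_bigA (fun i b => if i \in S then (b == x i)%:R else 1 : R)) /=.
rewrite -prodr_const [RHS]big_mkcond; apply: eq_bigr => i _; rewrite inE.
case: (i \in S) => /=; last by rewrite sumr_const card_ord.
by under eq_bigr do rewrite eq_sym; rewrite sum_indicator.
Qed.

Lemma twise_uniform_junta t (D : word -> R) S g :
  twise_uniform t D -> (#|S| <= t)%N -> depends_on S g ->
  \sum_x D x * g x = (q%:R ^+ n)^-1 * \sum_x g x.
Proof.
(* Weighting [D x * g x] by the [q ^ |~: S|] words [a] that agree with [x] on [S] and
   exchanging the sums leaves [Pr_D[x = a on S] = q ^- |S|] as the weight of [g a]. *)
move=> unifD le_St dg.
have agreeE (x a : word) : [forall i in S, a i == x i] -> g a = g x.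
  by move/forall_inP=> agree; apply: dg => i /agree /eqP.
have scaled : (\sum_x D x * g x) * q%:R ^+ #|~: S| =
              (q%:R ^+ #|S|)^-1 * \sum_a g a.
  rewrite mulr_suml.
  under eq_bigr => x _ do rewrite -mulrA -(card_agree S x) mulr_sumr.
  rewrite (eq_bigr (fun x : word => \sum_(a : word) D x * ([forall i in S, a i == x i]%:R * g a)));
    last first.
    move=> x _; rewrite mulr_sumr; apply: eq_bigr => a _.
    case: (boolP [forall i in S, a i == x i]) => [/agreeE -> | _].
      by rewrite mulr1 mul1r.
    by rewrite mulr0n mulr0 mul0r.
  rewrite exchange_big mulr_sumr; apply: eq_bigr => a _.
  rewrite -(unifD S a le_St) mulr_suml [RHS]big_mkcond; apply: eq_bigr => x _.
  have -> : [forall i in S, x i == a i] = [forall i in S, a i == x i].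
    by apply: eq_forallb => i; rewrite eq_sym.
  by case: ifP => _; rewrite ?mul1r // mulr0n mul0r mulr0.
have q_neq0 m : q%:R ^+ m != 0 :> R by rewrite expf_neq0 // pnatr_neq0.
apply: (mulIf (q_neq0 #|~: S|)); rewrite scaled.
have -> : q%:R ^+ n = q%:R ^+ #|S| * q%:R ^+ #|~: S| :> R.
  by rewrite -exprD cardsC card_ord.
by rewrite invfM mulrAC divfK.
Qed.

Lemma twise_uniform_low_degree t (D : word -> R) g :
  twise_uniform t D -> low_degree t g ->
  \sum_x D x * g x = (q%:R ^+ n)^-1 * \sum_x g x.
Proof.
move=> unifD; elim=> {g} [S g | g h _ IHg _ IHh | g h _ IHg e].
- exact: twise_uniform_junta.
- under eq_bigr do rewrite mulrDr.
  by rewrite big_split /= IHg IHh big_split /= mulrDr.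
- by rewrite -(eq_bigr _ (fun x _ => congr1 _ (e x))) IHg; under eq_bigr do rewrite e.
Qed.

End LowDegree.

Arguments low_degree_cst {R n q} t a.

Lemma dist_expect_01 (R : realDomainType) (n q : nat) (D g : word n q -> R) :
  is_distribution D -> (forall x, 0 <= g x <= 1) -> 0 <= \sum_x D x * g x <= 1.
Proof.
move=> [D_ge0 D_sum1] g01; apply/andP; split.
  by apply: sumr_ge0 => x _; rewrite mulr_ge0 //; case/andP: (g01 x).
rewrite -D_sum1; apply: ler_sum => x _.
by rewrite -[leRHS]mulr1 ler_wpM2l //; case/andP: (g01 x).
Qed.

Lemma twise_uniform_word0 (R : numFieldType) (q t : nat) (D : word 0 q -> R) :
  is_distribution D -> twise_uniform t D.
Proof.
move=> [_ D_sum1] S a _.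
have -> : #|S| = 0%N by apply/eqP; rewrite -leqn0 (leq_trans (max_card _)) ?card_ord.
by rewrite expr0 invr1 -D_sum1; apply: eq_bigl => x; apply/forall_inP => -[].
Qed.

Section UniformExpectation.
Variables (R : numFieldType) (n q : nat).
Hypothesis q_gt0 : (0 < q)%N.
Local Notation word := (word n q).

Definition unif_mass : 'I_n -> 'I_q -> R := fun _ _ => q%:R^-1.

Lemma unif_mass_ge0 i b : 0 <= unif_mass i b.
Proof. by rewrite invr_ge0 ler0n. Qed.

Lemma sum_unif_mass i : \sum_b unif_mass i b = 1.
Proof. by rewrite /unif_mass sumr_const card_ord -[q%:R^-1 *+ q]mulr_natr mulVf ?pnatr_neq0. Qed.

Lemma expect_unif (g : word -> R) : expect unif_mass g = (q%:R ^+ n)^-1 * \sum_x g x.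
Proof.
rewrite /expect mulr_sumr; apply: eq_bigr => y _.
by rewrite /prod_mass prodr_const card_ord exprVn.
Qed.

End UniformExpectation.

Arguments unif_mass {R n q} i b.

Section Propagation.
Variables (R : numDomainType) (n w : nat).
Implicit Types (M : 'I_n -> 'I_w -> 'I_w -> R) (v T : 'I_w -> R) (s : seq 'I_n).

(* [forward M v s] is the row vector [v * M_s1 * ... * M_sk] and [backward M s T] the
   column vector [M_s1 * ... * M_sk * T]. *)
Definition forward M v s := foldl (fun v i u => \sum_c v c * M i c u) v s.

Fixpoint backward M s T : 'I_w -> R :=
  if s is i :: s' then fun c => \sum_u M i c u * backward M s' T u else T.

Lemma eq_backward M M' s T : (forall i c u, M i c u = M' i c u) ->
  backward M s T =1 backward M' s T.
Proof. by move=> e; elim: s => [|i s IH] c //=; apply: eq_bigr => u _; rewrite e IH. Qed.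

Lemma forward_backward M v s T :
  \sum_u forward M v s u * T u = \sum_u v u * backward M s T u.
Proof.
elim: s v => [|i s IH] v //=; rewrite IH /=.
under eq_bigr do rewrite mulr_suml; rewrite exchange_big /=.
by apply: eq_bigr => c _; rewrite mulr_sumr; apply: eq_bigr => u _; rewrite mulrA.
Qed.

Lemma backward_01 M s T :
  (forall i c u, 0 <= M i c u) -> (forall i c, \sum_u M i c u = 1) ->
  (forall c, 0 <= T c <= 1) -> forall c, 0 <= backward M s T c <= 1.
Proof.
move=> M_ge0 M_sum T01; elim: s => [|i s IH] c //=.
apply/andP; split.
  by apply: sumr_ge0 => u _; rewrite mulr_ge0 //; case/andP: (IH u).
rewrite -(M_sum i c); apply: ler_sum => u _.
by rewrite -[leRHS]mulr1 ler_wpM2l //; case/andP: (IH u).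
Qed.

End Propagation.

Section BranchingProgram.
Variables (R : realFieldType) (n q w : nat) (B : ROBP n w q).
Hypothesis q_gt0 : (0 < q)%N.
Local Notation word := (word n q).
Local Notation EU := (@expect R n q unif_mass).

Definition step (i : 'I_n) (a : 'I_q) (c u : 'I_w) : R := (robp_trans B i c a == u)%:R.
Definition avg_step i c u : R := q%:R^-1 * \sum_a step i a c u.
Definition dev_step i a c u : R := step i a c u - avg_step i c u.
Definition accept_vec (u : 'I_w) : R := (u \in robp_accept B)%:R.
Definition start_vec (u : 'I_w) : R := (robp_start B == u)%:R.

Lemma step_01 i a c u : 0 <= step i a c u <= 1.
Proof. by rewrite /step; case: eqP; rewrite ?lexx ?ler01. Qed.

Lemma sum_step i a c : \sum_u step i a c u = 1.
Proof. exact: sum_indicator. Qed.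

Lemma sum_avg_step i c : \sum_u avg_step i c u = 1.
Proof.
rewrite -mulr_sumr exchange_big /=; under eq_bigr do rewrite sum_step.
by rewrite sumr_const card_ord mulVf ?pnatr_neq0.
Qed.

Lemma avg_step_ge0 i c u : 0 <= avg_step i c u.
Proof.
by rewrite mulr_ge0 ?invr_ge0 ?ler0n // sumr_ge0 // => a _; case/andP: (step_01 i a c u).
Qed.

Lemma avg_step_01 i c u : 0 <= avg_step i c u <= 1.
Proof.
rewrite avg_step_ge0 -(sum_avg_step i c) (bigD1 u) //= lerDl.
by rewrite sumr_ge0 // => v _; apply: avg_step_ge0.
Qed.

Lemma sum_dev_step i c u : \sum_a dev_step i a c u = 0.
Proof.
rewrite sumrB /avg_step sumr_const card_ord -mulrnAl -[q%:R^-1 *+ q]mulr_natr.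
by rewrite mulVf ?pnatr_neq0 // mul1r subrr.
Qed.

Lemma accept_vec_01 u : 0 <= accept_vec u <= 1.
Proof. by rewrite /accept_vec; case: (_ \in _); rewrite ?lexx ?ler01. Qed.

Definition accepts_from (s : seq 'I_n) (y : word) (v : 'I_w) : R :=
  (foldl (fun v i => robp_trans B i v (y i)) v s \in robp_accept B)%:R.

Lemma accepts_from_cons i s y v :
  accepts_from (i :: s) y v = \sum_u step i (y i) v u * accepts_from s y u.
Proof. by rewrite sum_indicatorM. Qed.

Lemma eq_accepts_from s (y y' : word) v :
  {in s, y =1 y'} -> accepts_from s y v = accepts_from s y' v.
Proof.
elim: s v => [|i s IH] v // eq_yy'.
rewrite /accepts_from /= eq_yy' ?mem_head //; apply: IH => l l_s.
by rewrite eq_yy' // in_cons l_s orbT.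
Qed.

Lemma expect_accepts_from (c : 'I_n -> 'I_q -> R) s v :
  uniq s -> (forall i, \sum_b c i b = 1) ->
  expect c (fun y => accepts_from s y v) =
  backward (fun i c' u => \sum_b c i b * step i b c' u) s accept_vec v.
Proof.
move=> + c_sum; elim: s v => [|i s IH] v /=.
  by move=> _; rewrite -(expect_cst (accept_vec v) c_sum); apply: eq_expect.
case/andP=> i_notin_s uniq_s.
transitivity (expect c (fun y => \sum_u accepts_from s y u * step i (y i) v u)).
  by apply: eq_expect => y; rewrite accepts_from_cons; apply: eq_bigr => u _; rewrite mulrC.
rewrite (expect_free_of_sumM (fun b u => step i b v u) (c_sum i)); last first.
  move=> u y y' eq_yy'; apply: eq_accepts_from => l l_s; apply: eq_yy'.
  by apply: contraNneq i_notin_s => <-.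
by apply: eq_bigr => u _; rewrite IH // mulrC.
Qed.

Lemma unif_robp_backward :
  (q%:R ^+ n)^-1 * \sum_x robp_fun R B x =
  backward avg_step (enum 'I_n) accept_vec (robp_start B).
Proof.
rewrite -expect_unif //.
rewrite (expect_accepts_from _ (enum_uniq _) (sum_unif_mass R q_gt0)).
by apply: eq_backward => i c u; rewrite /avg_step mulr_sumr.
Qed.

Definition level_step i (a : 'I_q) (st : nat -> 'I_w -> R) : nat -> 'I_w -> R :=
  fun m u => \sum_c st m c * avg_step i c u +
             (if m is m'.+1 then \sum_c st m' c * dev_step i a c u else 0).

(* [walk_part p x m] is the degree-[m] part of the row vector
   [start_vec * prod_(i <- p) (avg_step i + dev_step i (x i))]: the sum of the
   products choosing [dev_step] at exactly [m] positions of [p]. *)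
Definition walk_part (p : seq 'I_n) (x : word) : nat -> 'I_w -> R :=
  foldl (fun st i => level_step i (x i) st) (fun m u => (m == 0)%:R * start_vec u) p.

Definition prev_part p x m c := if m is m'.+1 then walk_part p x m' c else 0.

Lemma walk_part_nil x m u : walk_part [::] x m u = (m == 0)%:R * start_vec u.
Proof. by []. Qed.

Lemma walk_part_rcons p i x m u :
  walk_part (rcons p i) x m u =
  \sum_c walk_part p x m c * avg_step i c u + \sum_c prev_part p x m c * dev_step i (x i) c u.
Proof.
rewrite /walk_part foldl_rcons /level_step -/(walk_part p x); case: m => [|m] //=.
by rewrite [X in _ = _ + X]big1 ?addr0 // => c _; rewrite mul0r.
Qed.

Lemma eq_walk_part p (x x' : word) : {in p, x =1 x'} -> walk_part p x = walk_part p x'.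
Proof.
rewrite /walk_part.
elim: p (fun (m : nat) (u : 'I_w) => (m == 0)%:R * start_vec u : R) => [|i p IH] st //= eq_xx'.
rewrite eq_xx' ?mem_head // IH // => l l_p; apply: eq_xx'.
by rewrite in_cons l_p orbT.
Qed.

Lemma walk_part_free_of p i m c : i \notin p -> free_of i (fun x => walk_part p x m c).
Proof.
move=> i_notin_p y y' eq_yy'; rewrite (@eq_walk_part p y y') // => l l_p.
by apply: eq_yy'; apply: contraNneq i_notin_p => <-.
Qed.

Lemma prev_part_free_of p i m c : i \notin p -> free_of i (fun x => prev_part p x m c).
Proof. by case: m => [|m] //= i_notin_p y y'; apply: walk_part_free_of. Qed.

Lemma walk_part0 p x u : walk_part p x 0 u = forward avg_step start_vec p u.
Proof.
elim/last_ind: p u => [|p i IH] u; first by rewrite walk_part_nil mul1r.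
rewrite walk_part_rcons /forward foldl_rcons -/(forward _ _ p) [X in _ + X]big1 ?addr0.
  by apply: eq_bigr => c _; rewrite IH.
by move=> c _; rewrite mul0r.
Qed.

Lemma low_degree_walk_part p m u : low_degree m (fun x => walk_part p x m u).
Proof.
elim/last_ind: p m u => [|p i IH] m u; first exact: low_degree_cst.
apply: eq_low_degree; last by move=> x; rewrite walk_part_rcons.
apply: low_degreeD; apply: low_degree_sum => c.
  by have := low_degreeM (IH m c) (low_degree_cst 0 (avg_step i c u)); rewrite addn0.
case: m => [|m] /=.
  by apply: eq_low_degree (low_degree_cst 0 0) _ => x; rewrite mul0r.
rewrite -addn1; apply: low_degreeM (IH m c) _.
exact: low_degree_coord (fun a => dev_step i a c u) _.
Qed.

Definition walk_indicator p (x : word) u : R :=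
  (foldl (fun v i => robp_trans B i v (x i)) (robp_start B) p == u)%:R.

Lemma walk_indicator_rcons p i x u :
  walk_indicator (rcons p i) x u = \sum_c walk_indicator p x c * step i (x i) c u.
Proof. by rewrite /walk_indicator foldl_rcons sum_indicatorM. Qed.

Lemma sum_walk_part p x u N :
  (size p < N)%N -> \sum_(m < N) walk_part p x m u = walk_indicator p x u.
Proof.
elim/last_ind: p u N => [|p i IH] u [|N] //= lt_pN.
  rewrite big_ord_recl big1 => [|m _]; last by rewrite walk_part_nil mul0r.
  by rewrite walk_part_nil mul1r addr0.
under eq_bigr do rewrite walk_part_rcons.
rewrite size_rcons ltnS in lt_pN.
rewrite big_split /= exchange_big /= [X in _ + X]exchange_big /=.
transitivity (\sum_c walk_indicator p x c * avg_step i c u +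
              \sum_c walk_indicator p x c * dev_step i (x i) c u).
  congr (_ + _); apply: eq_bigr => c _; rewrite -mulr_suml.
    by rewrite IH // ltnW.
  by rewrite big_ord_recl /= add0r -(IH c N) //; under eq_bigr do rewrite lift0.
rewrite -big_split /= walk_indicator_rcons.
by apply: eq_bigr => c _; rewrite -mulrDr /dev_step addrC subrK.
Qed.

Lemma unif_dev_stepM i (K : R) c u : \sum_b unif_mass i b * (K * dev_step i b c u) = 0.
Proof. by rewrite /unif_mass -!mulr_sumr sum_dev_step !mulr0. Qed.

Lemma expect_walk_part p m u : uniq p -> (0 < m)%N -> EU (fun x => walk_part p x m u) = 0.
Proof.
elim/last_ind: p m u => [|p i IH] m u uniq_p m_gt0.
  by apply: expect0 => x; rewrite walk_part_nil; case: m m_gt0 => // m _; rewrite mul0r.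
move: uniq_p; rewrite rcons_uniq => /andP [i_notin_p uniq_p].
have unif_i := sum_unif_mass R q_gt0 i.
transitivity (EU (fun x => \sum_c walk_part p x m c * (fun _ c => avg_step i c u) (x i) c +
                           \sum_c prev_part p x m c * dev_step i (x i) c u)).
  by apply: eq_expect => x; rewrite walk_part_rcons.
rewrite expectD.
rewrite (expect_free_of_sumM (fun _ c => avg_step i c u) unif_i); last first.
  by move=> c; apply: walk_part_free_of.
rewrite (expect_free_of_sumM (fun b c => dev_step i b c u) unif_i); last first.
  by move=> c; apply: prev_part_free_of.
rewrite big1 ?add0r => [|c _]; last by rewrite IH ?mul0r.
by rewrite big1 // => c _; rewrite /unif_mass -mulr_sumr sum_dev_step !mulr0.
Qed.

Lemma walk_part_orth p m m' a b : uniq p -> m != m' ->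
  EU (fun x => walk_part p x m a * walk_part p x m' b) = 0.
Proof.
elim/last_ind: p m m' a b => [|p i IH] m m' a b uniq_p neq_mm'.
  apply: expect0 => x; rewrite !walk_part_nil.
  by case: m m' neq_mm' => [|m] [|m'] //= _; rewrite !mul0r ?mulr0.
move: uniq_p; rewrite rcons_uniq => /andP [i_notin_p uniq_p].
have unif_i := sum_unif_mass R q_gt0 i.
have W_free m0 c : free_of i (fun x => walk_part p x m0 c) by apply: walk_part_free_of.
have P_free m0 c : free_of i (fun x => prev_part p x m0 c) by apply: prev_part_free_of.
pose avg a' (_ : 'I_q) c := avg_step i c a'.
pose dev a' b' c := dev_step i b' c a'.
pose Wa m0 a' (x : word) := \sum_c walk_part p x m0 c * avg a' (x i) c.
pose Pd m0 a' (x : word) := \sum_c prev_part p x m0 c * dev a' (x i) c.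
transitivity (EU (fun x => Wa m a x * Wa m' b x + Wa m a x * Pd m' b x +
                           (Pd m a x * Wa m' b x + Pd m a x * Pd m' b x))).
  by apply: eq_expect => x; rewrite !walk_part_rcons /Wa /Pd /=; ring.
rewrite !expectD /Wa /Pd.
rewrite (expect_free_of_sum2M (avg a) (avg b) unif_i (W_free m) (W_free m')).
rewrite (expect_free_of_sum2M (avg a) (dev b) unif_i (W_free m) (P_free m')).
rewrite (expect_free_of_sum2M (dev a) (avg b) unif_i (P_free m) (W_free m')).
rewrite (expect_free_of_sum2M (dev a) (dev b) unif_i (P_free m) (P_free m')) /avg /dev.
rewrite big1 ?add0r => [|c _]; last by rewrite big1 // => d _; rewrite IH ?mul0r.
rewrite big1 ?add0r => [|c _]; last by rewrite big1 // => d _; rewrite unif_dev_stepM mulr0.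
rewrite big1 ?add0r => [|c _].
  rewrite big1 // => c _; rewrite big1 // => d _.
  case: m m' neq_mm' => [|m] [|m'] //= neq_mm'; last by rewrite IH ?mul0r.
  - by rewrite expect0 ?mul0r // => x; rewrite mul0r.
  - by rewrite expect0 ?mul0r // => x; rewrite mulr0.
rewrite big1 // => d _.
by under eq_bigr do rewrite [_ * avg_step _ _ _]mulrC; rewrite unif_dev_stepM mulr0.
Qed.

Lemma dev_step_sqr_le1 i a c u : dev_step i a c u ^+ 2 <= 1.
Proof.
have /andP [? ?] := step_01 i a c u; have /andP [? ?] := avg_step_01 i c u.
rewrite /dev_step; nra.
Qed.

(* The terms of degree [m.+1] in which [dev_step i] is the last deviation chosen. *)
Definition boundary_part p i (x : word) m u :=
  \sum_c walk_part p x m c * dev_step i (x i) c u.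

Lemma low_degree_boundary_part p i m u :
  low_degree m.+1 (fun x => boundary_part p i x m u).
Proof.
apply: low_degree_sum => c; rewrite -addn1; apply: low_degreeM.
  exact: low_degree_walk_part.
exact: low_degree_coord (fun a => dev_step i a c u) _.
Qed.

Lemma sum_boundary_part p i x u N : (size p < N)%N ->
  \sum_(m < N) boundary_part p i x m u =
  dev_step i (x i) (foldl (fun v i => robp_trans B i v (x i)) (robp_start B) p) u.
Proof.
move=> lt_pN; rewrite exchange_big /=.
under eq_bigr do rewrite -mulr_suml sum_walk_part //.
exact: sum_indicatorM.
Qed.

Lemma boundary_part_orth p i m m' u : uniq p -> i \notin p -> m != m' ->
  EU (fun x => boundary_part p i x m u * boundary_part p i x m' u) = 0.
Proof.
move=> uniq_p i_notin_p neq_mm'.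
have W_free c : free_of i (fun x => walk_part p x _ c) by apply: walk_part_free_of.
rewrite (expect_free_of_sum2M (fun b c => dev_step i b c u) (fun b c => dev_step i b c u)
  (sum_unif_mass R q_gt0 i) (W_free m) (W_free m')).
by rewrite big1 // => c _; rewrite big1 // => d _; rewrite walk_part_orth ?mul0r.
Qed.

Lemma expect_boundary_part_sqr_le1 p i m u : uniq p -> i \notin p ->
  EU (fun x => boundary_part p i x m u ^+ 2) <= 1.
Proof.
move=> uniq_p i_notin_p.
pose N := (size p + m).+1.
have lt_pN : (size p < N)%N by rewrite ltnS leq_addr.
have lt_mN : (m < N)%N by rewrite ltnS leq_addl.
pose Z (j : 'I_N) x := boundary_part p i x j u.
have sum_sqr : EU (fun x => (\sum_j Z j x) ^+ 2) = \sum_j EU (fun x => Z j x ^+ 2).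
  transitivity (EU (fun x => \sum_j \sum_j' Z j x * Z j' x)).
    by apply: eq_expect => x; rewrite expr2 mulr_suml; under eq_bigr do rewrite mulr_sumr.
  rewrite expect_sum; apply: eq_bigr => j _.
  rewrite expect_sum (bigD1 j) //= big1 ?addr0 => [|j' neq_j'j].
    by apply: eq_expect => x; rewrite expr2.
  by apply: boundary_part_orth; rewrite // eq_sym.
have sum_le1 : EU (fun x => (\sum_j Z j x) ^+ 2) <= 1.
  rewrite -[leRHS](@expect_cst R n q unif_mass 1 (sum_unif_mass R q_gt0)).
  apply: ler_expect => [j b|x]; first exact: unif_mass_ge0.
  by rewrite /Z (sum_boundary_part i x u lt_pN) dev_step_sqr_le1.
apply: le_trans sum_le1; rewrite sum_sqr (bigD1 (Ordinal lt_mN)) //= lerDl.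
apply: sumr_ge0 => j _; apply: sumr_ge0 => x _; rewrite mulr_ge0 ?sqr_ge0 //.
by apply: prodr_ge0 => l _; apply: unif_mass_ge0.
Qed.

Section Noise.
Variable eta : R.
Hypothesis eta_01 : 0 <= eta <= 1.

Definition noisy_step i a c u := (1 - eta) * step i a c u + eta * avg_step i c u.

Lemma noisy_stepE i a c u :
  noisy_step i a c u = avg_step i c u + (1 - eta) * dev_step i a c u.
Proof. by rewrite /noisy_step /dev_step; ring. Qed.

Lemma noisy_step_ge0 i a c u : 0 <= noisy_step i a c u.
Proof.
have /andP [eta_ge0 eta_le1] := eta_01.
have /andP [step_ge0 _] := step_01 i a c u.
by apply: addr_ge0; apply: mulr_ge0; rewrite ?subr_ge0 ?avg_step_ge0.
Qed.

Lemma sum_noisy_step i a c : \sum_u noisy_step i a c u = 1.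
Proof.
rewrite big_split /= -[\sum_u (1 - eta) * _]mulr_sumr -[\sum_u eta * _]mulr_sumr.
by rewrite sum_step sum_avg_step; ring.
Qed.

Definition noisy_value s (x : word) := backward (fun i => noisy_step i (x i)) s accept_vec.

Lemma noisy_value_01 s x c : 0 <= noisy_value s x c <= 1.
Proof.
apply: backward_01 => [i ? ?|i ?|]; [exact: noisy_step_ge0 | exact: sum_noisy_step |].
exact: accept_vec_01.
Qed.

Definition noise_mass (x : word) i b : R := (1 - eta) * (b == x i)%:R + eta / q%:R.

Lemma sum_noise_mass x i : \sum_b noise_mass x i b = 1.
Proof.
rewrite big_split /= -mulr_sumr sumr_const card_ord.
under eq_bigr do rewrite eq_sym; rewrite sum_indicator.
by rewrite -[_ *+ q]mulr_natr divfK ?pnatr_neq0 // mulr1 subrK.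
Qed.

Lemma noise_op_noisy_value x :
  noise_op eta (robp_fun R B) x = noisy_value (enum 'I_n) x (robp_start B).
Proof.
rewrite [LHS](expect_accepts_from _ (enum_uniq _) (sum_noise_mass x)).
apply: eq_backward => i c u; rewrite /noise_mass /noisy_step /avg_step.
under eq_bigr do rewrite mulrDl; rewrite big_split /= mulrA -mulr_sumr.
congr (_ + _); rewrite -(sum_indicatorM (x i) (fun b => (1 - eta) * step i b c u)).
by apply: eq_bigr => b _; rewrite eq_sym mulrCA mulrA.
Qed.

Variable d : nat.

Definition trunc_walk p x u := \sum_(m < d.+1) (1 - eta) ^+ m * walk_part p x m u.

Definition error_term p i s x :=
  (1 - eta) ^+ d.+1 * \sum_u boundary_part p i x d u * noisy_value s x u.

Fixpoint error_sum p s x :=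
  if s is i :: s' then error_term p i s' x + error_sum (rcons p i) s' x else 0.

Lemma trunc_walk_noisy_step p i x u :
  \sum_c trunc_walk p x c * noisy_step i (x i) c u =
  trunc_walk (rcons p i) x u + (1 - eta) ^+ d.+1 * boundary_part p i x d u.
Proof.
pose A m := \sum_c walk_part p x m c * avg_step i c u.
pose Z m := boundary_part p i x m u.
have -> : \sum_c trunc_walk p x c * noisy_step i (x i) c u =
    \sum_(m < d.+1) (1 - eta) ^+ m * A m + (1 - eta) * \sum_(m < d.+1) (1 - eta) ^+ m * Z m.
  transitivity (\sum_c \sum_(m < d.+1) ((1 - eta) ^+ m * (walk_part p x m c * avg_step i c u) +
      (1 - eta) * ((1 - eta) ^+ m * (walk_part p x m c * dev_step i (x i) c u)))).
    apply: eq_bigr => c _; rewrite /trunc_walk mulr_suml; apply: eq_bigr => m _.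
    by rewrite noisy_stepE; ring.
  rewrite exchange_big /= [X in _ = _ + X]mulr_sumr -big_split /=.
  by apply: eq_bigr => m _; rewrite big_split /= /A /Z /boundary_part -!mulr_sumr.
have -> : trunc_walk (rcons p i) x u =
    \sum_(m < d.+1) (1 - eta) ^+ m * A m +
    \sum_(m < d.+1) (1 - eta) ^+ m * (if (m : nat) is m'.+1 then Z m' else 0).
  rewrite /trunc_walk -big_split /=; apply: eq_bigr => m _.
  rewrite walk_part_rcons mulrDr; congr (_ + _ * _).
  by case: (nat_of_ord m) => [|m'] //=; rewrite big1 // => c _; rewrite mul0r.
by rewrite mulr_sum_powers addrA.
Qed.

Lemma trunc_walk_telescope s p x :
  \sum_u trunc_walk p x u * noisy_value s x u =
  \sum_u trunc_walk (p ++ s) x u * accept_vec u + error_sum p s x.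
Proof.
elim: s p => [|i s IH] p; first by rewrite cats0 addr0.
have -> : \sum_u trunc_walk p x u * noisy_value (i :: s) x u =
    \sum_v (trunc_walk (rcons p i) x v * noisy_value s x v +
            (1 - eta) ^+ d.+1 * (boundary_part p i x d v * noisy_value s x v)).
  under [RHS]eq_bigr => v _ do rewrite mulrA -mulrDl -trunc_walk_noisy_step mulr_suml.
  rewrite exchange_big /=; apply: eq_bigr => u _; rewrite mulr_sumr.
  by apply: eq_bigr => v _; rewrite mulrA.
by rewrite big_split /= IH cat_rcons /error_term -mulr_sumr -addrA (addrC (error_sum _ _ _)).
Qed.

Variable D : word -> R.
Hypothesis D_dist : is_distribution D.
Hypothesis D_unif : twise_uniform (2 * d.+1) D.

Lemma twise_boundary_part_sqr_le1 p i u : uniq p -> i \notin p ->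
  \sum_x D x * boundary_part p i x d u ^+ 2 <= 1.
Proof.
move=> uniq_p i_notin_p; rewrite (twise_uniform_low_degree q_gt0 D_unif).
  by rewrite -expect_unif //; apply: expect_boundary_part_sqr_le1.
apply: (@eq_low_degree _ _ _ _ (fun x => boundary_part p i x d u * boundary_part p i x d u)).
  by rewrite mul2n -addnn; apply: low_degreeM; apply: low_degree_boundary_part.
by move=> x; rewrite expr2.
Qed.

Lemma norm_error_term_le p i s x :
  `|error_term p i s x| <= (1 - eta) ^+ d.+1 * \sum_u ((1 + boundary_part p i x d u ^+ 2) / 2).
Proof.
have /andP [_ eta_le1] := eta_01.
rewrite /error_term normrM ger0_norm ?exprn_ge0 ?subr_ge0 // ler_wpM2l ?exprn_ge0 ?subr_ge0 //.
apply: le_trans (ler_norm_sum _ _ _) _; apply: ler_sum => u _.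
have /andP [nv_ge0 nv_le1] := noisy_value_01 s x u.
rewrite normrM (ger0_norm nv_ge0); apply: le_trans (normr_le_halfD1sqr _).
by rewrite -[leRHS]mulr1 ler_wpM2l.
Qed.

Lemma norm_twise_error_term_le p i s : uniq p -> i \notin p ->
  `|\sum_x D x * error_term p i s x| <= (1 - eta) ^+ d.+1 * w%:R.
Proof.
move=> uniq_p i_notin_p; have [D_ge0 D_sum1] := D_dist.
have /andP [_ eta_le1] := eta_01.
set r := (1 - eta) ^+ d.+1; have r_ge0 : 0 <= r by rewrite exprn_ge0 ?subr_ge0.
apply: le_trans (ler_norm_sum _ _ _) _.
apply: (@le_trans _ _ (\sum_x D x * (r * \sum_u ((1 + boundary_part p i x d u ^+ 2) / 2)))).
  apply: ler_sum => x _; rewrite normrM ger0_norm //.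
  by apply: ler_wpM2l => //; apply: norm_error_term_le.
have -> : \sum_x D x * (r * \sum_u ((1 + boundary_part p i x d u ^+ 2) / 2)) =
          r * \sum_u ((1 + \sum_x D x * boundary_part p i x d u ^+ 2) / 2).
  transitivity (\sum_x \sum_u r * (D x * ((1 + boundary_part p i x d u ^+ 2) / 2))).
    by apply: eq_bigr => x _; rewrite mulrCA !mulr_sumr.
  rewrite exchange_big /=; under eq_bigr do rewrite -mulr_sumr; rewrite -mulr_sumr.
  congr (_ * _); apply: eq_bigr => u _.
  rewrite -[X in (X + _) / 2]D_sum1 -big_split mulr_suml /=.
  by apply: eq_bigr => x _; ring.
rewrite ler_wpM2l // -[w in _ <= w%:R]card_ord -sumr_const.
apply: ler_sum => u _; have := twise_boundary_part_sqr_le1 u uniq_p i_notin_p; lra.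
Qed.

Lemma norm_twise_error_sum_le p s : uniq (p ++ s) ->
  `|\sum_x D x * error_sum p s x| <= (size s)%:R * ((1 - eta) ^+ d.+1 * w%:R).
Proof.
elim: s p => [|i s IH] p uniq_ps /=.
  by rewrite big1 ?normr0 ?mul0r // => x _; rewrite mulr0.
move: (uniq_ps); rewrite cat_uniq => /and3P [uniq_p /hasPn p_disj _].
have i_notin_p : i \notin p by apply: p_disj; rewrite mem_head.
under eq_bigr do rewrite mulrDr; rewrite big_split /= -natr1 mulrDl mul1r.
apply: le_trans (ler_normD _ _) _; rewrite [leRHS]addrC lerD ?norm_twise_error_term_le //.
by apply: IH; rewrite cat_rcons.
Qed.

Lemma twise_trunc_walk p u : uniq p ->
  \sum_x D x * trunc_walk p x u = forward avg_step start_vec p u.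
Proof.
move=> uniq_p.
have D_fools (m : 'I_d.+1) : \sum_x D x * walk_part p x m u = EU (fun x => walk_part p x m u).
  rewrite (twise_uniform_low_degree q_gt0 D_unif) ?expect_unif //.
  apply: low_degreeW (low_degree_walk_part p m u).
  by rewrite mul2n -addnn (leq_trans (ltnW (ltn_ord m))) ?leq_addr.
transitivity (\sum_(m < d.+1) (1 - eta) ^+ m * EU (fun x => walk_part p x m u)).
  under eq_bigr do rewrite mulr_sumr; rewrite exchange_big /=.
  by apply: eq_bigr => m _; rewrite -D_fools mulr_sumr; apply: eq_bigr => x _; rewrite mulrCA.
rewrite big_ord_recl big1 => [|m _]; last by rewrite expect_walk_part ?mulr0.
rewrite expr0 mul1r addr0 -[RHS](@expect_cst _ n q unif_mass _ (sum_unif_mass R q_gt0)).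
by apply: eq_expect => x; rewrite walk_part0.
Qed.

Lemma noise_op_trunc_walk x :
  noise_op eta (robp_fun R B) x =
  \sum_u trunc_walk (enum 'I_n) x u * accept_vec u + error_sum [::] (enum 'I_n) x.
Proof.
rewrite noise_op_noisy_value -[in RHS](trunc_walk_telescope (enum 'I_n) [::] x) /=.
rewrite -sum_indicatorM.
apply: eq_bigr => u _; congr (_ * _).
rewrite /trunc_walk big_ord_recl big1 => [|m _]; last by rewrite walk_part_nil mul0r mulr0.
by rewrite walk_part_nil !mul1r addr0.
Qed.

Lemma twise_noise_robp_bias :
  `| \sum_x D x * noise_op eta (robp_fun R B) x - (q%:R ^+ n)^-1 * \sum_x robp_fun R B x |
    <= n%:R * w%:R * (1 - eta) ^+ d.+1.
Proof.
under eq_bigr do rewrite noise_op_trunc_walk mulrDr; rewrite big_split /=.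
have -> : \sum_x D x * \sum_u trunc_walk (enum 'I_n) x u * accept_vec u =
          (q%:R ^+ n)^-1 * \sum_x robp_fun R B x.
  rewrite unif_robp_backward -sum_indicatorM -forward_backward.
  under eq_bigr do rewrite mulr_sumr; rewrite exchange_big /=.
  apply: eq_bigr => u _; under eq_bigr do rewrite mulrA.
  by rewrite -mulr_suml twise_trunc_walk ?enum_uniq.
rewrite addrAC subrr add0r mulrAC.
by have := @norm_twise_error_sum_le [::] (enum 'I_n) (enum_uniq _); rewrite size_enum_ord mulrA.
Qed.

Lemma noise_robp_bias_le1 :
  `| \sum_x D x * noise_op eta (robp_fun R B) x - (q%:R ^+ n)^-1 * \sum_x robp_fun R B x |
    <= 1.
Proof.
have /andP [noisy_ge0 noisy_le1] : 0 <= \sum_x D x * noise_op eta (robp_fun R B) x <= 1.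
  by apply: dist_expect_01 => // x; rewrite noise_op_noisy_value noisy_value_01.
have /andP [unif_ge0 unif_le1] := backward_01 (enum 'I_n) avg_step_ge0 sum_avg_step
  accept_vec_01 (robp_start B).
rewrite unif_robp_backward ler_norml; apply/andP; split; lra.
Qed.

End Noise.

End BranchingProgram.

Theorem theorem4p2 (R : realFieldType) (q n k w : nat) (D : word n q -> R) (eta : R) :
  (1 < q)%N ->
  is_distribution D ->
  twise_uniform (2 * k) D ->
  0 <= eta <= 1 ->
  forall B : ROBP n w q,
    `| \sum_(x : word n q) D x * noise_op eta (robp_fun R B) x
       - (q%:R ^+ n)^-1 * \sum_(x : word n q) robp_fun R B x |
    <= n%:R * w%:R * (1 - eta) ^+ k.
Proof.
move=> q_gt1 D_dist D_unif eta_01 B; have q_gt0 := ltnW q_gt1.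
case: k D_unif => [|d] D_unif; last exact: twise_noise_robp_bias.
(* For [k = 0] the bound is at least [1] unless [n = 0], where [D] is [2]-wise uniform. *)
case: n D B D_dist D_unif => [|n] D B D_dist _.
  have D_unif : twise_uniform (2 * 1) D := twise_uniform_word0 D_dist.
  by have := twise_noise_robp_bias B q_gt0 eta_01 D_dist D_unif; rewrite !mul0r.
apply: le_trans (noise_robp_bias_le1 B q_gt0 eta_01 D_dist) _.
rewrite expr0 mulr1 -natrM ler1n muln_gt0 /=.
exact: leq_ltn_trans (ltn_ord (robp_start B)).
Qed.
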